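(* Let $G$ be a graph with at least one vertex and maximum degree $\Delta$, and let $\lambda,\beta,\gamma>0$ be such that the hard-core model on $G$ at fugacity $\lambda$ has local $(\beta,\gamma)$-occupancy. Then \[ \frac{1}{|V(G)|}\,\frac{\lambda Z_G'(\lambda)}{Z_G(\lambda)}\ \ge\ \frac{1}{\beta+\gamma\Delta}, \qquad\text{and in particular}\qquad \alpha(G)\ \ge\ \frac{|V(G)|}{\beta+\gamma\Delta}. \]
   Context: All graphs are finite and simple. For a graph $G$, $\mathcal I(G)$ denotes the set of independent sets of $G$ (including $\varnothing$), $\alpha(G)$ the maximum size of an independent set, and $Z_G(\lambda)=\sum_{I\in\mathcal I(G)}\lambda^{|I|}$ the partition function (independence polynomial), with $Z_G'$ its derivative in $\lambda$. The hard-core model on $G$ at fugacity $\lambda>0$ is the probability distribution on $\mathcal I(G)$ with $\Pr(\mathbf I=I)=\lambda^{|I|}/Z_G(\lambda)$; note $\mathbb E|\mathbf I|=\lambda Z_G'(\lambda)/Z_G(\lambda)$. $N(u)$ is the neighbourhood of $u$ and $G[N(u)]$ the subgraph it induces. Given $\lambda>0$ and positive reals $(\beta_u,\gamma_u)$ for $u\in V(G)$, the hard-core model on $G$ at fugacity $\lambda$ has local $(\beta_u,\gamma_u)_u$-occupancy if for every $u\in V(G)$ and every induced subgraph $F$ of $G[N(u)]$ (including the graph with no vertices, for which $Z_F=1$, $Z_F'=0$), \[\beta_u\frac{\lambda}{1+\lambda}\frac{1}{Z_F(\lambda)}+\gamma_u\frac{\lambda Z_F'(\lambda)}{Z_F(\lambda)}\ge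 1.\] Local $(\beta,\gamma)$-occupancy means local $(\beta_u,\gamma_u)_u$-occupancy with $\beta_u=\beta,\gamma_u=\gamma$ for all $u$. *)

From HB Require Import structures.
From mathcomp Require Import all_boot all_order all_algebra.
Set Implicit Arguments. Unset Strict Implicit. Unset Printing Implicit Defensive.
Import Order.TTheory GRing.Theory Num.Theory.
Local Open Scope ring_scope.

Definition simple_graph (T : finType) (e : rel T) : Prop :=
  symmetric e /\ irreflexive e.

Definition nbhd (T : finType) (e : rel T) (u : T) : {set T} := [set w | e u w].

Definition indep (T : finType) (e : rel T) (I : {set T}) : bool :=
  [forall x in I, forall y in I, ~~ e x y].

Definition maxdeg (T : finType) (e : rel T) : nat := (\max_(u : T) #|nbhd e u|)%N.

Definition alpha (T : finType) (e : rel T) : nat :=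
  (\max_(I : {set T} | indep e I) #|I|)%N.

(* Independence polynomial of the induced subgraph G[S]:
   sum over independent sets I of G contained in S of X^|I|. *)
Definition indpoly (R : nzRingType) (T : finType) (e : rel T) (S : {set T})
  : {poly R} :=
  \sum_(I : {set T} | (I \subset S) && indep e I) 'X^#|I|.

Definition Zpart (R : nzRingType) (T : finType) (e : rel T) (S : {set T}) (l : R) : R :=
  (indpoly R e S).[l].
Definition Zderiv (R : nzRingType) (T : finType) (e : rel T) (S : {set T}) (l : R) : R :=
  (indpoly R e S)^`().[l].

(* Local (beta,gamma)-occupancy: for every vertex u and every induced
   subgraph F of G[N(u)] (i.e. F = G[S] with S a subset of N(u)). *)
Definition local_occupancy (R : realFieldType) (T : finType) (e : rel T)
  (l b g : R) : Prop :=
  forall (u : T) (S : {set T}), S \subset nbhd e u ->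
    1 <= b * (l / (1 + l)) * (Zpart e S l)^-1
         + g * (l * Zderiv e S l / Zpart e S l).

From HB Require Import structures.
From mathcomp Require Import all_boot all_order all_algebra.
From mathcomp Require Import ring lra.
Set Implicit Arguments. Unset Strict Implicit. Unset Printing Implicit Defensive.
Import Order.TTheory GRing.Theory Num.Theory.
Local Open Scope ring_scope.

(* Write w(I) = l^|I|. Fix a vertex u and split every independent set I as
   K :|: A with K = I minus N(u) and A = I :&: N(u).  For fixed K, the set A
   ranges over the independent sets of G[S], where S is the set of neighbours
   of u adjacent to no vertex of K, so the local occupancy condition for
   F = G[S] applies to the inner sum.  Summing over K gives
     Z_G <= b l/(1+l) Z_{I :&: N(u) = set0} + g \sum_I w(I) #|I :&: N(u)|,
   and l/(1+l) Z_{I :&: N(u) = set0} = \sum_{I containing u} w(I), because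
   adding u to an independent set avoiding N[u] multiplies its weight by l.
   Summing over u counts each I exactly #|I| times in the first term and at
   most Delta #|I| times in the second, whence
   #|V| Z_G <= (b + g Delta) l Z'_G; finally l Z'_G <= alpha(G) Z_G. *)

Lemma big_set_disjoint_split (R : nmodType) (T : finType) (N : {set T})
    (F : {set T} -> R) :
  \sum_(I : {set T}) F I =
  \sum_(K : {set T} | [disjoint K & N]) \sum_(A : {set T} | A \subset N) F (K :|: A).
Proof.
rewrite (partition_big (fun I => I :\: N) (fun K => [disjoint K & N])); last first.
  by move=> I _; rewrite disjoints_subset setDE subsetIr.
apply: eq_bigr => K dKN.
rewrite (reindex_onto (fun A => K :|: A) (fun I => I :&: N)); last first.
  by move=> I /eqP <-; rewrite setUC setID.
apply: eq_bigl => A; apply/andP/idP => [[_ /eqP <-]|sAN]; first exact: subsetIr.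
have /eqP sAN0 : A :\: N == set0 by rewrite setD_eq0.
by rewrite setDUl setIUl (setDidPl dKN) sAN0 setU0 (disjoint_setI0 dKN) set0U (setIidPl sAN) !eqxx.
Qed.

Section IndependentSets.
Variables (T : finType) (e : rel T).

Lemma indepP (I : {set T}) : reflect {in I &, forall x y, ~~ e x y} (indep e I).
Proof.
apply: (iffP forall_inP) => [eI x y xI yI | eI x xI].
  exact: (forall_inP (eI x xI)).
by apply/forall_inP => y; apply: eI.
Qed.

Lemma indepS (I J : {set T}) : I \subset J -> indep e J -> indep e I.
Proof. by move=> /subsetP sIJ /indepP eJ; apply/indepP => x y /sIJ xJ /sIJ yJ; apply: eJ. Qed.

Lemma indep0 : indep e set0.
Proof. by apply/indepP => x y; rewrite inE. Qed.

Lemma card_nbhdI (u : T) (I : {set T}) :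
  #|nbhd e u :&: I| = (\sum_(v in I) (e u v : nat))%N.
Proof.
rewrite (eq_bigr (fun v => if e u v then 1 else 0)%N); last by move=> v _; case: (e u v).
by rewrite -big_mkcondr sum1dep_card; apply: eq_card => v; rewrite !inE andbC.
Qed.

Hypothesis e_sym : symmetric e.

Lemma indepU (K A : {set T}) :
  indep e (K :|: A) =
  [&& indep e K, indep e A & [forall x in K, forall y in A, ~~ e x y]].
Proof.
apply/idP/and3P => [eKA | [/indepP eK /indepP eA /forall_inP eKA]].
  split; [exact: indepS (subsetUl K A) eKA | exact: indepS (subsetUr K A) eKA |].
  apply/forall_inP => x xK; apply/forall_inP => y yA.
  by apply: (indepP _ eKA); rewrite inE ?xK ?yA ?orbT.
apply/indepP => x y; rewrite !inE => /orP[xK|xA] /orP[yK|yA]; first exact: eK.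
- exact: forall_inP (eKA x xK) y yA.
- by rewrite e_sym; exact: forall_inP (eKA y yK) x xA.
- exact: eA.
Qed.

Lemma sum_card_nbhdI (I : {set T}) :
  (\sum_(u : T) #|nbhd e u :&: I| = \sum_(v in I) #|nbhd e v|)%N.
Proof.
under eq_bigr => u _ do rewrite card_nbhdI.
rewrite exchange_big; apply: eq_bigr => v _.
by rewrite -(setIT (nbhd e v)) card_nbhdI; apply: eq_big => [w|w _]; rewrite ?inE // e_sym.
Qed.

Hypothesis e_irr : irreflexive e.

Lemma indep_setU1 (u : T) (J : {set T}) :
  indep e (u |: J) = indep e J && [disjoint nbhd e u & J].
Proof.
rewrite indepU andbA; congr (_ && _).
  by apply/andP/idP => [[] //|->]; split=> //; apply/indepP => x y /set1P-> /set1P->; rewrite e_irr.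
rewrite disjoints_subset; apply/forall_inP/subsetP => [eu y | eu x /set1P-> {x}].
  by rewrite !inE => euy; apply: contraL euy; exact: (forall_inP (eu u (set11 u))).
by apply/forall_inP => y yJ; apply: contraTN yJ => euy; have := eu y; rewrite !inE; apply.
Qed.

Lemma disjoint_nbhd_indep (u : T) (I : {set T}) :
  indep e I -> u \in I -> [disjoint nbhd e u & I].
Proof.
move=> eI uI; have uII : u |: I = I by apply/setUidPr; rewrite sub1set.
by move: eI; rewrite -{1}uII indep_setU1 => /andP[].
Qed.

End IndependentSets.

Section HardCoreSums.
Variables (R : realFieldType) (T : finType) (e : rel T) (l : R).
Hypothesis l_gt0 : 0 < l.

Lemma Zpart_sum (S : {set T}) :
  Zpart e S l = \sum_(A : {set T} | (A \subset S) && indep e A) l ^+ #|A|.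
Proof. by rewrite /Zpart /indpoly horner_sum; apply: eq_bigr => A _; rewrite hornerXn. Qed.

Lemma mulr_Zderiv_sum (S : {set T}) :
  l * Zderiv e S l = \sum_(A : {set T} | (A \subset S) && indep e A) #|A|%:R * l ^+ #|A|.
Proof.
rewrite /Zderiv /indpoly raddf_sum horner_sum mulr_sumr; apply: eq_bigr => A _.
rewrite /= derivXn hornerMn hornerXn mulrnAr.
by case: #|A| => [|n]; rewrite ?mulr0n ?mul0r // -exprS mulr_natl.
Qed.

Lemma Zpart_gt0 (S : {set T}) : 0 < Zpart e S l.
Proof.
rewrite Zpart_sum (bigD1 set0) /= ?sub0set ?indep0 // cards0 expr0.
by rewrite ltr_pwDl // sumr_ge0 // => A _; rewrite exprn_ge0 // ltW.
Qed.

Lemma occupancy_sum_ge0 (S : {set T}) (c g : R) :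
  1 <= c * (Zpart e S l)^-1 + g * (l * Zderiv e S l / Zpart e S l) ->
  0 <= \sum_(A : {set T} | (A \subset S) && indep e A)
          l ^+ #|A| * (c * (A == set0)%:R + g * #|A|%:R - 1).
Proof.
have Z_gt0 := Zpart_gt0 S.
rewrite mulrA -mulrDl ler_pdivlMr // mul1r mulr_Zderiv_sum Zpart_sum => occ.
have sum_set0 : \sum_(A : {set T} | (A \subset S) && indep e A) (A == set0)%:R * l ^+ #|A| = 1.
  rewrite (bigD1 set0) /= ?sub0set ?indep0 // big1 ?addr0 => [|A /andP[_ /negbTE->]].
    by rewrite eqxx cards0 expr0 mulr1.
  by rewrite mul0r.
rewrite (eq_bigr (fun A =>
    c * ((A == set0)%:R * l ^+ #|A|) + g * (#|A|%:R * l ^+ #|A|) - l ^+ #|A|));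
  last by move=> A _; ring.
by rewrite sumrB big_split /= -!mulr_sumr sum_set0 mulr1 subr_ge0.
Qed.

Hypothesis e_sym : symmetric e.

Lemma sum_indep_le_local (u : T) (c g : R) :
  (forall S : {set T}, S \subset nbhd e u ->
     1 <= c * (Zpart e S l)^-1 + g * (l * Zderiv e S l / Zpart e S l)) ->
  \sum_(I : {set T} | indep e I) l ^+ #|I| <=
  c * \sum_(I : {set T} | indep e I && [disjoint nbhd e u & I]) l ^+ #|I|
  + g * \sum_(I : {set T} | indep e I) l ^+ #|I| * #|nbhd e u :&: I|%:R.
Proof.
move=> occ; set N := nbhd e u; rewrite -subr_ge0.
pose f (A : {set T}) := c * [disjoint N & A]%:R + g * #|N :&: A|%:R - 1.
have -> : c * \sum_(I : {set T} | indep e I && [disjoint N & I]) l ^+ #|I|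
    + g * \sum_(I : {set T} | indep e I) l ^+ #|I| * #|N :&: I|%:R
    - \sum_(I : {set T} | indep e I) l ^+ #|I|
    = \sum_(I : {set T}) (if indep e I then l ^+ #|I| * f I else 0).
  rewrite -big_mkcond big_mkcondr !mulr_sumr -big_split -sumrB /=.
  by apply: eq_bigr => I _; rewrite /f; case: [disjoint N & I] => /=; ring.
rewrite (big_set_disjoint_split N); apply: sumr_ge0 => K dKN.
have [eK|neK] := boolP (indep e K); last first.
  by rewrite big1 // => A _; rewrite (contraNF (indepS (subsetUl K A))).
set S := [set a in N | [forall k in K, ~~ e k a]].
have sSN : S \subset N by apply/subsetP => a; rewrite inE => /andP[].
have indepKA (A : {set T}) : (A \subset N) && indep e (K :|: A) = (A \subset S) && indep e A.
  rewrite indepU // eK /= [indep e A && _]andbC andbA; congr (_ && _).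
  apply/andP/idP => [[sAN cross] | sAS]; last first.
    split; first exact: subset_trans sAS sSN.
    apply/forall_inP => k kK; apply/forall_inP => a /(subsetP sAS).
    by rewrite inE => /andP[_ /forall_inP]; apply.
  apply/subsetP => a aA; rewrite inE (subsetP sAN) //=.
  by apply/forall_inP => k kK; exact: forall_inP (forall_inP cross k kK) a aA.
have NKA (A : {set T}) : A \subset N -> N :&: (K :|: A) = A.
  by move=> sAN; rewrite setIUr setIC (disjoint_setI0 dKN) set0U; apply/setIidPr.
have cardKA (A : {set T}) : A \subset N -> #|K :|: A| = (#|K| + #|A|)%N.
  move=> sAN; rewrite cardsU (disjoint_setI0 (disjointWr sAN dKN)) cards0 subn0 //.
rewrite -big_mkcondr; under eq_bigl => A do rewrite indepKA.
rewrite (eq_bigr (fun A : {set T} =>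
    l ^+ #|K| * (l ^+ #|A| * (c * (A == set0)%:R + g * #|A|%:R - 1)))).
  rewrite -mulr_sumr mulr_ge0 ?exprn_ge0 ?(ltW l_gt0) //; exact: occupancy_sum_ge0 (occ S sSN).
move=> A /andP[sAS _]; have sAN := subset_trans sAS sSN.
by rewrite /f -setI_eq0 NKA // cardKA // exprD mulrA.
Qed.

Hypothesis e_irr : irreflexive e.

Lemma sum_indep_mem (u : T) :
  l / (1 + l) * \sum_(I : {set T} | indep e I && [disjoint nbhd e u & I]) l ^+ #|I|
  = \sum_(I : {set T} | indep e I && (u \in I)) l ^+ #|I|.
Proof.
set N := nbhd e u.
pose Zout := \sum_(J : {set T} | [&& indep e J, [disjoint N & J] & u \notin J]) l ^+ #|J|.
have Zin : \sum_(I : {set T} | indep e I && (u \in I)) l ^+ #|I| = l * Zout.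
  rewrite (reindex_onto (fun J => u |: J) (fun I => I :\ u)) => [|I /andP[_]]; last exact: setD1K.
  rewrite mulr_sumr; apply: eq_big => [J | J /andP[_ /eqP uJK]]; last first.
    by rewrite cardsU1 -uJK setD11 exprS.
  rewrite indep_setU1 // setU11 andbT -andbA; congr [&& _, _ & _].
  have [uJ | /setU1K ->] := boolP (u \in J); last by rewrite eqxx.
  by apply/negbTE/eqP => uJK; move: uJ; rewrite -uJK setD11.
rewrite (bigID (fun I : {set T} => u \in I)) /= Zin.
have -> : \sum_(I : {set T} | (indep e I && [disjoint N & I]) && (u \in I)) l ^+ #|I| = l * Zout.
  rewrite -Zin; apply: eq_bigl => I.
  by case: (boolP (indep e I)) (boolP (u \in I)) => [eI|//] [uI|];
    rewrite ?andbF ?disjoint_nbhd_indep.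
rewrite (eq_bigl (fun J : {set T} => [&& indep e J, [disjoint N & J] & u \notin J])) => [|J].
  by rewrite -/Zout; field; rewrite lt0r_neq0 // addr_gt0.
by rewrite andbA.
Qed.

Lemma Zpart_setT : Zpart e [set: T] l = \sum_(I : {set T} | indep e I) l ^+ #|I|.
Proof. by rewrite Zpart_sum; apply: eq_bigl => I; rewrite subsetT. Qed.

Lemma mulr_Zderiv_setT :
  l * Zderiv e [set: T] l = \sum_(I : {set T} | indep e I) #|I|%:R * l ^+ #|I|.
Proof. by rewrite mulr_Zderiv_sum; apply: eq_bigl => I; rewrite subsetT. Qed.

Lemma mulr_Zderiv_le_alpha : l * Zderiv e [set: T] l <= (alpha e)%:R * Zpart e [set: T] l.
Proof.
rewrite mulr_Zderiv_setT Zpart_setT mulr_sumr; apply: ler_sum => I eI.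
by rewrite ler_wpM2r ?exprn_ge0 ?(ltW l_gt0) // ler_nat; exact: leq_bigmax_cond.
Qed.

Lemma sum_occupancy :
  \sum_(u : T) \sum_(I : {set T} | indep e I && (u \in I)) l ^+ #|I|
  = \sum_(I : {set T} | indep e I) #|I|%:R * l ^+ #|I|.
Proof.
under eq_bigr => u _ do rewrite big_mkcondr.
rewrite exchange_big; apply: eq_bigr => I _.
by rewrite -big_mkcond sumr_const mulr_natl.
Qed.

Lemma sum_nbhd_weight_le :
  \sum_(u : T) \sum_(I : {set T} | indep e I) l ^+ #|I| * #|nbhd e u :&: I|%:R
  <= (maxdeg e)%:R * \sum_(I : {set T} | indep e I) #|I|%:R * l ^+ #|I|.
Proof.
rewrite exchange_big mulr_sumr; apply: ler_sum => I _.
rewrite -mulr_sumr -natr_sum sum_card_nbhdI // mulrA -natrM mulrC.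
rewrite ler_wpM2r ?exprn_ge0 ?(ltW l_gt0) // ler_nat mulnC -sum_nat_const.
by apply: leq_sum => v _; exact: leq_bigmax.
Qed.

Lemma card_mul_Zpart_le (b g : R) : 0 <= g -> local_occupancy e l b g ->
  #|T|%:R * Zpart e [set: T] l
    <= (b + g * (maxdeg e)%:R) * (l * Zderiv e [set: T] l).
Proof.
move=> g_ge0 occ; rewrite Zpart_setT mulr_Zderiv_setT.
have vertex_le (u : T) : \sum_(I : {set T} | indep e I) l ^+ #|I| <=
    b * \sum_(I : {set T} | indep e I && (u \in I)) l ^+ #|I|
    + g * \sum_(I : {set T} | indep e I) l ^+ #|I| * #|nbhd e u :&: I|%:R.
  by rewrite -sum_indep_mem mulrA; exact: sum_indep_le_local (occ u).
have -> : #|T|%:R * \sum_(I : {set T} | indep e I) l ^+ #|I|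
    = \sum_(u : T) \sum_(I : {set T} | indep e I) l ^+ #|I|.
  by rewrite sumr_const mulr_natl.
apply: le_trans (ler_sum _ (fun u _ => vertex_le u)) _.
rewrite big_split /= -!mulr_sumr sum_occupancy mulrDl lerD // -mulrA.
by rewrite ler_wpM2l // sum_nbhd_weight_le.
Qed.

End HardCoreSums.

Theorem mainTheorem1 (R : realFieldType) (T : finType) (e : rel T)
  (l b g : R) :
  simple_graph e -> (0 < #|T|)%N ->
  0 < l -> 0 < b -> 0 < g ->
  local_occupancy e l b g ->
  (#|T|%:R)^-1 * (l * Zderiv e [set: T] l / Zpart e [set: T] l)
    >= (b + g * (maxdeg e)%:R)^-1
  /\ (alpha e)%:R >= #|T|%:R / (b + g * (maxdeg e)%:R).
Proof.
move=> [e_sym e_irr] T_gt0 l_gt0 b_gt0 g_gt0 occ.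
have nZ_le := card_mul_Zpart_le l_gt0 e_sym e_irr (ltW g_gt0) occ.
have D_le := mulr_Zderiv_le_alpha e l_gt0.
have Z_gt0 := Zpart_gt0 e l_gt0 [set: T].
have n_gt0 : 0 < #|T|%:R :> R by rewrite ltr0n.
set Z := Zpart e [set: T] l in nZ_le D_le Z_gt0 *.
set D := l * Zderiv e [set: T] l in nZ_le D_le *.
set B := b + g * (maxdeg e)%:R in nZ_le *.
have B_gt0 : 0 < B by rewrite ltr_wpDr // mulr_ge0 ?ler0n ?ltW.
split.
  by rewrite ler_pdivlMl // ler_pdivlMr // mulrAC ler_pdivrMr // [D * _]mulrC.
by rewrite ler_pdivrMr //; nra.
Qed.
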